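(* Let $\kappa$ be a regular uncountable cardinal and $I$ an ideal on $\kappa$. If $I$ is quasinormal and prepleasant, then $I$ is pleasant, and therefore normal.
   Context: An ideal on $\kappa$ is a family of subsets of $\kappa$ closed under subsets and finite unions, which is $<\kappa$-complete and contains all singletons. $I^*=\{\kappa\setminus X: X\in I\}$. For $A\subseteq\kappa$ and $X_\alpha\subseteq\kappa$, $\bigtriangledown_{\alpha\in A}X_\alpha=\{\xi<\kappa:\exists\alpha<\xi\,(\alpha\in A\wedge \xi\in X_\alpha)\}$. $I$ is normal if $X_\alpha\in I$ for all $\alpha<\kappa$ implies $\bigtriangledown_{\alpha<\kappa}X_\alpha\in I$. $I$ is pleasant if whenever $A\in I$ and $X_\alpha\in I$ for all $\alpha$, then $\bigtriangledown_{\alpha\in A}X_\alpha\in I$. $I$ is prepleasant if for every $Q\in I$ and every sequence $\langle B_\alpha\rangle_{\alpha<\kappa}$ of bounded subsets of $\kappa$, $\bigtriangledown_{\alpha\in Q}B_\alpha\in I$. $I$ is quasinormal if for every sequence $\langle X_\alpha\rangle_{\alpha<\kappa}$ of members of $I$ there is $Q\in I^*$ with $\bigtriangledown_{\alpha\in Q}X_\alpha\in I$. *)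

(* a cardinal kappa is modelled as a type K with a strict
   well-order lt (the von Neumann ordinals below kappa); subsets of kappa
   are predicates K -> Prop; an ideal is a predicate on such subsets. *)
From Stdlib Require Import Relations Wellfounded.

Definition set_of (K : Type) := K -> Prop.

Definition seg {K : Type} (lt : K -> K -> Prop) (a : K) := {b : K | lt b a}.

Record reg_uncountable_cardinal (K : Type) (lt : K -> K -> Prop) : Prop := {
  rc_wf : well_founded lt;
  rc_trans : forall a b c, lt a b -> lt b c -> lt a c;
  rc_total : forall a b, lt a b \/ a = b \/ lt b a;
  rc_cardinal : forall a : K,
      ~ exists f : K -> seg lt a, forall x y, f x = f y -> x = y;
  rc_regular : forall (a : K) (f : seg lt a -> K),
      exists g : K, forall x, lt (f x) g;
  rc_uncountable : ~ exists f : K -> nat, forall x y, f x = f y -> x = y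
}.

Record is_ideal (K : Type) (lt : K -> K -> Prop) (I : set_of K -> Prop) : Prop := {
  id_subset : forall X Y : set_of K, I Y -> (forall x, X x -> Y x) -> I X;
  id_union : forall X Y : set_of K, I X -> I Y -> I (fun x => X x \/ Y x);
  id_complete : forall (a : K) (X : seg lt a -> set_of K),
      (forall b, I (X b)) -> I (fun x => exists b, X b x);
  id_singleton : forall a : K, I (fun x => x = a)
}.

Definition dual_filter {K : Type} (I : set_of K -> Prop) (Q : set_of K) : Prop :=
  exists X, I X /\ forall x, Q x <-> ~ X x.

Definition diag_union {K : Type} (lt : K -> K -> Prop)
    (A : set_of K) (X : K -> set_of K) : set_of K :=
  fun xi => exists alpha, lt alpha xi /\ A alpha /\ X alpha xi.

Definition bounded {K : Type} (lt : K -> K -> Prop) (B : set_of K) : Prop :=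
  exists g, forall x, B x -> lt x g.

Definition normal_ideal {K : Type} (lt : K -> K -> Prop) (I : set_of K -> Prop) :=
  forall X : K -> set_of K, (forall a, I (X a)) ->
    I (diag_union lt (fun _ => True) X).

Definition pleasant {K : Type} (lt : K -> K -> Prop) (I : set_of K -> Prop) :=
  forall (A : set_of K) (X : K -> set_of K), I A -> (forall a, I (X a)) ->
    I (diag_union lt A X).

Definition prepleasant {K : Type} (lt : K -> K -> Prop) (I : set_of K -> Prop) :=
  forall (Q : set_of K) (B : K -> set_of K), I Q -> (forall a, bounded lt (B a)) ->
    I (diag_union lt Q B).

Definition quasinormal {K : Type} (lt : K -> K -> Prop) (I : set_of K -> Prop) :=
  forall X : K -> set_of K, (forall a, I (X a)) ->
    exists Q, dual_filter I Q /\ I (diag_union lt Q X).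

From Stdlib Require Import Classical.

(* Given [X_a] in [I], quasinormality applied to the cumulative unions
   [Y_b = U_{a <= b} X_a] yields [Q] in [I^*] with the diagonal union of [Y]
   over [Q] in [I].  A point [xi] of the diagonal union of [X] over [A],
   witnessed by [a < xi], either has some [b] in [Q] with [a <= b < xi], so it
   lies in that diagonal union, or it lies below the next element of [Q] above
   [a].  These last sets are bounded because [Q], being co-small, is unbounded,
   so prepleasantness covers the rest.  Normality then follows by splitting a
   diagonal union over [kappa] into the parts over [Q] and over [kappa \ Q]. *)

Section DiagonalUnions.

Variables (K : Type) (lt : K -> K -> Prop) (I : set_of K -> Prop).
Hypothesis lt_irrefl : forall x, ~ lt x x.
Hypothesis lt_trans : forall a b c, lt a b -> lt b c -> lt a c.
Hypothesis lt_total : forall a b, lt a b \/ a = b \/ lt b a.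
Hypothesis HI : is_ideal K lt I.

Definition cumul (X : K -> set_of K) (b : K) : set_of K :=
  fun xi => exists a, ~ lt b a /\ X a xi.

Definition gap_above (Q : set_of K) (a : K) : set_of K :=
  fun xi => forall b, Q b -> lt b xi -> lt b a.

Lemma ideal_cover (X Y Z : set_of K) :
  I X -> I Y -> (forall x, Z x -> X x \/ Y x) -> I Z.
Proof.
  intros HX HY HZ. apply (id_subset _ _ _ HI _ _ (id_union _ _ _ HI _ _ HX HY)).
  exact HZ.
Qed.

Lemma ideal_le (g : K) : I (fun x => ~ lt g x).
Proof.
  apply (ideal_cover _ _ _ (id_singleton _ _ _ HI g)
           (id_complete _ _ _ HI g (fun b x => x = proj1_sig b)
              (fun b => id_singleton _ _ _ HI (proj1_sig b)))).
  intros x Hx. destruct (lt_total x g) as [Hxg | [Hxg | Hgx]].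
  - right. exists (exist _ x Hxg). reflexivity.
  - left. exact Hxg.
  - contradiction.
Qed.

Lemma ideal_cumul (X : K -> set_of K) : (forall a, I (X a)) -> forall b, I (cumul X b).
Proof.
  intros HX b.
  apply (ideal_cover _ _ _ (HX b)
           (id_complete _ _ _ HI b (fun c => X (proj1_sig c)) (fun c => HX (proj1_sig c)))).
  intros xi [a [Hba Hxi]]. destruct (lt_total a b) as [Hab | [Hab | Hab]].
  - right. exists (exist _ a Hab). exact Hxi.
  - left. subst. exact Hxi.
  - contradiction.
Qed.

Lemma dual_filter_unbounded (Q : set_of K) :
  ~ I (fun _ => True) -> dual_filter I Q -> forall g, exists x, Q x /\ lt g x.
Proof.
  intros Hproper [X [HX HQ]] g. apply NNPP. intro Hbounded. apply Hproper.
  apply (ideal_cover _ _ _ HX (ideal_le g)). intros x _.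
  destruct (classic (X x)) as [Hx | Hx]; [now left | right].
  intro Hgx. apply Hbounded. exists x. split; [apply HQ; exact Hx | exact Hgx].
Qed.

Lemma gap_above_bounded (Q : set_of K) (a : K) :
  (forall g, exists x, Q x /\ lt g x) -> bounded lt (gap_above Q a).
Proof.
  intros HQ. destruct (HQ a) as [q [Hq Haq]]. destruct (HQ q) as [g [_ Hqg]].
  exists g. intros xi Hxi. destruct (lt_total xi q) as [H | [H | H]].
  - exact (lt_trans _ _ _ H Hqg).
  - subst. exact Hqg.
  - exfalso. exact (lt_irrefl a (lt_trans _ _ _ Haq (Hxi q Hq H))).
Qed.

Lemma diag_union_split (A Q : set_of K) (X : K -> set_of K) (xi : K) :
  diag_union lt A X xi ->
  diag_union lt Q (cumul X) xi \/ diag_union lt A (gap_above Q) xi.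
Proof.
  intros [a [Hlt [HA HX]]].
  destruct (classic (exists b, Q b /\ lt b xi /\ ~ lt b a)) as [[b [Hb [Hbxi Hba]]] | Hgap].
  - left. exists b. repeat split; [exact Hbxi | exact Hb | exists a; split; assumption].
  - right. exists a. repeat split; [exact Hlt | exact HA |].
    intros b Hb Hbxi. apply NNPP. intro Hba. apply Hgap. exists b. auto.
Qed.

Lemma quasinormal_prepleasant_pleasant :
  quasinormal lt I -> prepleasant lt I -> pleasant lt I.
Proof.
  intros Hqn Hpp A X HA HX.
  destruct (classic (I (fun _ => True))) as [Hfull | Hproper].
  { apply (id_subset _ _ _ HI _ _ Hfull). auto. }
  destruct (Hqn (cumul X) (ideal_cumul X HX)) as [Q [HQ HQcumul]].
  pose proof (dual_filter_unbounded Q Hproper HQ) as Hunbounded.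
  apply (ideal_cover _ _ _ HQcumul
           (Hpp A (gap_above Q) HA (fun a => gap_above_bounded Q a Hunbounded))).
  apply diag_union_split.
Qed.

Lemma pleasant_quasinormal_normal :
  quasinormal lt I -> pleasant lt I -> normal_ideal lt I.
Proof.
  intros Hqn Hpl X HX. destruct (Hqn X HX) as [Q [[C [HC HQC]] HQX]].
  apply (ideal_cover _ _ _ HQX (Hpl C X HC HX)).
  intros xi [a [Hlt [_ Hxi]]]. destruct (classic (C a)) as [Ha | Ha].
  - right. exists a. auto.
  - left. exists a. repeat split; [exact Hlt | apply HQC; exact Ha | exact Hxi].
Qed.

End DiagonalUnions.

Lemma wf_irrefl (K : Type) (lt : K -> K -> Prop) :
  well_founded lt -> forall x, ~ lt x x.
Proof.
  intros Hwf x. induction (Hwf x) as [x _ IH]. intro Hxx. exact (IH x Hxx Hxx).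
Qed.

Theorem corollary3p3 (K : Type) (lt : K -> K -> Prop)
    (Hk : reg_uncountable_cardinal K lt) (I : set_of K -> Prop)
    (HI : is_ideal K lt I) :
  quasinormal lt I -> prepleasant lt I -> pleasant lt I /\ normal_ideal lt I.
Proof.
  intros Hqn Hpp.
  assert (Hpl : pleasant lt I)
    by exact (quasinormal_prepleasant_pleasant K lt I (wf_irrefl K lt (rc_wf _ _ Hk))
         (rc_trans _ _ Hk) (rc_total _ _ Hk) HI Hqn Hpp).
  split; [exact Hpl | exact (pleasant_quasinormal_normal K lt I HI Hqn Hpl)].
Qed.
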